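(* Let $q\ge3$ be prime and let $T\subseteq\mathbb{F}_q$ have size $\ell\le q-1$. If $2\le\ell\le 2q/3$, then $T$ is $\delta$-mixing for some $\delta\ge\log_q(16/13)$. Otherwise, $T$ is $\delta$-mixing for some $\delta\ge\log_q\left(\frac{\ell^2}{q^2-3\ell(q-\ell)}\right)$.
   Context: For a prime power $q$ and $\delta\ge 0$ (or any real $\delta$), a set $T\subseteq\mathbb{F}_q$ is $\delta$-mixing if for all $\alpha,\beta,\gamma\in\mathbb{F}_q$ with $\alpha,\beta\neq0$, $\Pr[\alpha X+\beta X'\in T+\gamma]\le q^{-\delta}$, where $X,X'$ are independent and uniform on $T$ and $T+\gamma=\{t+\gamma:t\in T\}$. *)

From HB Require Import structures.
From mathcomp Require Import all_boot all_order all_algebra all_field.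
From mathcomp Require Import all_classical all_reals all_analysis.
Set Implicit Arguments. Unset Strict Implicit. Unset Printing Implicit Defensive.
Import Order.TTheory GRing.Theory Num.Theory.
Local Open Scope ring_scope.

(* Pr[a X + b X' \in T + g] for X, X' independent uniform on T *)
Definition mix_prob (R : realType) (F : finFieldType) (T : {set F})
  (a b g : F) : R :=
  (#|[set xy : F * F | [&& xy.1 \in T, xy.2 \in T &
        a * xy.1 + b * xy.2 \in [set t + g | t in T]]]|)%:R
  / ((#|T| ^ 2)%N)%:R.

Definition delta_mixing (R : realType) (F : finFieldType) (T : {set F})
  (delta : R) : Prop :=
  forall a b g : F, a != 0 -> b != 0 ->
    mix_prob R T a b g <= (#|F|%:R : R) `^ (- delta).

Definition logb (R : realType) (q x : R) : R := ln x / ln q.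

(* Let N be the number of pairs (x, y) in T^2 with a x + b y in T + g, so that
   the mixing probability is N / l^2.  N is the number of representations
   c = u + v with u in aT, v in bT, summed over the l elements c of T + g.
   Pollard's theorem in Z/q, sum_x min(t, r(x)) >= t (|A| + |B| - t) whenever
   |A| + |B| <= q + t, proved by induction on |B| via Dyson's e-transform,
   bounds this by l^2 - t (l - t); for t = l/2 that is at most 13 l^2 / 16.
   For large l, inclusion-exclusion wins: (x, y) |-> a x + b y is injective in
   each variable, so complementing one coordinate at a time gives
   N + l (q - l) <= l^2 + (q - l)^2, i.e. N <= q^2 - 3 l (q - l). *)

From HB Require Import structures.
From mathcomp Require Import all_boot all_order all_algebra all_field.
From mathcomp Require Import all_classical all_reals all_analysis.
From mathcomp Require Import zify lra.
Import Order.TTheory GRing.Theory Num.Theory.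
Set Implicit Arguments. Unset Strict Implicit. Unset Printing Implicit Defensive.
Local Open Scope ring_scope.

Lemma card_set_sum (T : finType) (A : {pred T}) (P : pred T) :
  #|[set x in A | P x]| = (\sum_(x in A) P x)%N.
Proof.
rewrite -sum1dep_card big_mkcond [RHS]big_mkcond; apply: eq_bigr => x _.
by case: (x \in A); case: (P x).
Qed.

Lemma sum_mem_inj (T : finType) (f : T -> T) (C : {set T}) :
  injective f -> (\sum_y (f y \in C) = #|C|)%N.
Proof.
move=> f_inj; rewrite -sum1_card [RHS](reindex_inj f_inj) [RHS]big_mkcond.
by apply: eq_bigr => y _; case: (f y \in C).
Qed.

Section PairCount.
Variables (G : finType) (w : G -> G -> G).

Definition pair_count (A B C : {set G}) : nat :=
  (\sum_(x in A) \sum_(y in B) (w x y \in C))%N.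

Lemma pair_countE (A B C : {set G}) :
  #|[set xy | [&& xy.1 \in A, xy.2 \in B & w xy.1 xy.2 \in C]]| = pair_count A B C.
Proof.
transitivity (\sum_(x in A) \sum_(y | (y \in B) && (w x y \in C)) 1)%N.
  by rewrite pair_big_dep sum1dep_card.
by apply: eq_bigr => x _; rewrite big_mkcondr.
Qed.

Lemma pair_count_setC3 A B C :
  (pair_count A B C + pair_count A B (~: C) = #|A| * #|B|)%N.
Proof.
rewrite -big_split -sum_nat_const; apply: eq_bigr => x _.
rewrite -big_split -sum1_card; apply: eq_bigr => y _.
by rewrite inE; case: (w x y \in C).
Qed.

Lemma pair_count_setC2 A B C : (forall x, injective (w x)) ->
  (pair_count A B C + pair_count A (~: B) C = #|A| * #|C|)%N.
Proof.
move=> w_inj; rewrite -big_split -sum_nat_const; apply: eq_bigr => x _.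
rewrite -(sum_mem_inj C (w_inj x)) [RHS](bigID (mem B)) /=.
by congr (_ + _); apply: eq_bigl => y; rewrite inE.
Qed.

Lemma pair_count_setC1 A B C : (forall y, injective (w^~ y)) ->
  (pair_count A B C + pair_count (~: A) B C = #|B| * #|C|)%N.
Proof.
move=> w_inj; rewrite /pair_count exchange_big [X in (_ + X)%N]exchange_big /=.
rewrite -big_split -sum_nat_const; apply: eq_bigr => y _.
rewrite -(sum_mem_inj C (w_inj y)) [RHS](bigID (mem A)) /=.
by congr (_ + _); apply: eq_bigl => x; rewrite inE.
Qed.

Lemma pair_count_le A B C :
  (forall x, injective (w x)) -> (forall y, injective (w^~ y)) ->
  (pair_count A B C + #|A| * #|~: C| <= #|A| * #|B| + #|~: B| * #|~: C|)%N.
Proof.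
move=> w_inj1 w_inj2.
have := pair_count_setC3 A B C; have := pair_count_setC2 A B (~: C) w_inj1.
have := pair_count_setC1 A (~: B) (~: C) w_inj2; lia.
Qed.
End PairCount.

Section Pollard.
Variable G : finZmodType.
(* Pollard's setting: G is cyclic of prime order. *)
Hypothesis natmul_onto : forall d x : G, d != 0 -> exists k, x = d *+ k.

Definition rep (A B : {set G}) (x : G) : nat := #|[set a in A | x - a \in B]|.

Definition translate (A : {set G}) (e : G) : {set G} := [set a : G | a - e \in A].

Lemma card_translate A e : #|translate A e| = #|A|.
Proof. exact/card_preimset/addIr. Qed.

Lemma rep_le_card A B x : (rep A B x <= #|B|)%N.
Proof.
rewrite -(card_preimset B (inv_inj (subKr x))); apply/subset_leq_card.
by apply/fintype.subsetP => a; rewrite !inE => /andP[].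
Qed.

Lemma sum_rep_in (A B C : {set G}) : (\sum_(c in C) rep A B c = pair_count +%R A B C)%N.
Proof.
under eq_bigr => c _ do rewrite /rep card_set_sum.
rewrite exchange_big; apply: eq_bigr => a _.
rewrite big_mkcond [RHS]big_mkcond (reindex_inj (addrI a)) /=.
by apply: eq_bigr => b _; rewrite [a + b]addrC addrK; case: (b \in B); case: (_ \in C).
Qed.

Lemma sum_rep A B : (\sum_x rep A B x = #|A| * #|B|)%N.
Proof.
transitivity (\sum_(x in [set: G]) rep A B x)%N; first by apply: eq_bigl => x; rewrite inE.
rewrite sum_rep_in -sum_nat_const; apply: eq_bigr => a _.
by rewrite -sum1_card; apply: eq_bigr => b _; rewrite inE.
Qed.

Section Transform.
Variables (A B : {set G}) (e : G).

Lemma card_transform_overlap : #|A :&: translate B e| = #|B :&: translate A (- e)|.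
Proof.
rewrite -(card_preimset _ (addIr e)); apply: eq_card => b.
by rewrite !inE opprK addrK andbC.
Qed.

Lemma card_transform_union :
  (#|A :|: translate B e| + #|B :&: translate A (- e)| = #|A| + #|B|)%N.
Proof. by rewrite -card_transform_overlap cardsUI card_translate. Qed.

Lemma rep_transform x :
  (rep (A :|: translate B e) (B :&: translate A (- e)) x
     + rep (A :\: translate B e) (B :\: translate A (- e)) x <= rep A B x)%N.
Proof.
rewrite /rep; set Be := translate B e; set Ae := translate A (- e).
set P := [set a in A | x - a \in B]; set E := [set a : G | x - a \in Ae].
set S := [set a in A :|: Be | x - a \in B :&: Ae].
have card_P : #|P| = (#|P :&: E| + #|(P :\: E) :&: Be| + #|(P :\: E) :\: Be|)%N.
  by rewrite -addnA !cardsID.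
have card_S : #|S| = (#|S :&: A| + #|S :\: A|)%N by rewrite cardsID.
have S_in_A : S :&: A = P :&: E.
  apply/finset.setP => a; rewrite !inE opprK.
  by do ![case: (_ \in _)].
have rep_diff : [set a in A :\: Be | x - a \in B :\: Ae] = (P :\: E) :\: Be.
  apply/finset.setP => a; rewrite !inE opprK.
  by do ![case: (_ \in _)].
(* New representations a \notin A are old ones x - a + e lost by the transform. *)
have reflect_inj : injective (fun a => x - a + e).
  by move=> a b /addIr /(inv_inj (subKr x)).
have S_out_A : (#|S :\: A| <= #|(P :\: E) :&: Be|)%N.
  rewrite -(card_imset _ reflect_inj); apply/subset_leq_card/fintype.subsetP.
  move=> _ /imsetP[a + ->]; rewrite !inE opprK opprD addrA subKr subrK addrK.
  by do ![case: (_ \in _)].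
rewrite -/S card_S S_in_A rep_diff card_P; lia.
Qed.
End Transform.

Lemma translate_closed_setT (A : {set G}) a0 d : a0 \in A -> d != 0 ->
  (forall a, a \in A -> a + d \in A) -> A = [set: G].
Proof.
move=> a0A d_neq0 closedA; apply/finset.setP => x; rewrite inE.
have [k ->] : exists k, x = a0 + d *+ k.
  by have [k xa0] := natmul_onto (x - a0) d_neq0; exists k; rewrite -xa0 subrKC.
by elim: k => [|k IHk]; rewrite ?mulr0n ?addr0 // mulrS addrCA addrC closedA.
Qed.

Lemma exists_proper_overlap (A B : {set G}) :
  (0 < #|A| < #|G|)%N -> (1 < #|B|)%N ->
  exists e, (0 < #|B :&: translate A (- e)| < #|B|)%N.
Proof.
case/andP=> /card_gt0P[a0 a0A] AG /card_gt1P[b1 [b2 [b1B b2B b12]]].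
suff /existsP[e] : [exists e, 0 < #|B :&: translate A (- e)| < #|B|]%N by exists e.
apply: contraLR AG => /existsPn no_e; rewrite -leqNgt -cardsT.
suff -> : A = [set: G] by [].
(* Otherwise each overlap containing b1 is all of B, so A is closed under + (b2 - b1). *)
apply: (translate_closed_setT a0A (d := b2 - b1)); first by rewrite subr_eq0 eq_sym.
move=> a aA; set e := a - b1.
have overlap_full : B :&: translate A (- e) = B.
  have s_gt0 : (0 < #|B :&: translate A (- e)|)%N.
    by apply/card_gt0P; exists b1; rewrite !inE opprK subrKC b1B.
  apply/eqP; rewrite eqEcard subsetIl /= leqNgt.
  by apply/negP => sB; move/negP: (no_e e); rewrite s_gt0 sB.
by move: b2B; rewrite -overlap_full !inE opprK addrCA => /andP[].
Qed.

Lemma minn_transform_le t s r r1 r2 : (r1 <= s)%N -> (r1 + r2 <= r)%N ->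
  (minn t r1 + minn (t - s) r2 <= minn t r)%N.
Proof. lia. Qed.

Theorem pollard (A B : {set G}) t :
  (t <= #|A|)%N -> (t <= #|B|)%N -> (#|A| + #|B| <= #|G| + t)%N ->
  (t * (#|A| + #|B| - t) <= \sum_x minn t (rep A B x))%N.
Proof.
have [n] := ubnP #|B|; elim: n => // n IH in A B t *; rewrite ltnS => Bn tA tB ABG.
have [->|t_gt0] := posnP t; first by rewrite mul0n.
have [Bt | tB'] := leqP #|B| t.
  have eBt : #|B| = t by apply/eqP; rewrite eqn_leq Bt tB.
  under eq_bigr => x _ do rewrite (minn_idPr (leq_trans (rep_le_card A B x) Bt)).
  by rewrite sum_rep eBt addnK mulnC.
have [e] : exists e, (0 < #|B :&: translate A (- e)| < #|B|)%N.
  by apply: exists_proper_overlap; lia.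
set A1 := A :|: translate B e; set B1 := B :&: translate A (- e).
set A2 := A :\: translate B e; set B2 := B :\: translate A (- e).
case/andP=> B1_gt0 B1B.
have cA1 : (#|A1| + #|B1| = #|A| + #|B|)%N := card_transform_union A B e.
have cA2 : (#|A2| + #|B1| = #|A|)%N.
  by rewrite /B1 -card_transform_overlap addnC cardsID.
have cB2 : (#|B2| + #|B1| = #|B|)%N by rewrite addnC cardsID.
have A1G : (#|A1| <= #|G|)%N := max_card _.
have split_sum : (\sum_x minn t (rep A1 B1 x) + \sum_x minn (t - #|B1|) (rep A2 B2 x)
                   <= \sum_x minn t (rep A B x))%N.
  rewrite -big_split; apply: leq_sum => x _.
  exact: minn_transform_le (rep_le_card _ _ x) (rep_transform A B e x).
have [ts | st] := leqP t #|B1|.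
  have IH1 : (t * (#|A1| + #|B1| - t) <= \sum_x minn t (rep A1 B1 x))%N.
    by apply: IH; lia.
  by rewrite -cA1; lia.
have IH2 : ((t - #|B1|) * (#|A2| + #|B2| - (t - #|B1|))
             <= \sum_x minn (t - #|B1|) (rep A2 B2 x))%N.
  by apply: IH; lia.
have sum1 : (\sum_x minn t (rep A1 B1 x) = #|A1| * #|B1|)%N.
  rewrite -sum_rep; apply: eq_bigr => x _.
  exact/minn_idPr/(leq_trans (rep_le_card _ _ x) (ltnW st)).
by move: split_sum IH2; rewrite sum1; nia.
Qed.

Lemma sum_rep_in_le (A B C : {set G}) t :
  (t <= #|A|)%N -> (t <= #|B|)%N -> (#|A| + #|B| <= #|G| + t)%N ->
  (\sum_(c in C) rep A B c + t * (#|A| + #|B| - t) <= #|A| * #|B| + t * #|C|)%N.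
Proof.
move=> tA tB ABG; rewrite -(sum_rep A B) [X in (_ <= X + _)%N](bigID (mem C)) /=.
rewrite -addnA leq_add2l.
apply: leq_trans (pollard tA tB ABG) _; rewrite (bigID (mem C)) /= addnC leq_add //.
  by apply: leq_sum => c _; apply: geq_minr.
by rewrite mulnC -sum_nat_const; apply: leq_sum => c _; apply: geq_minl.
Qed.
End Pollard.

Definition mix_count (F : finFieldType) (T : {set F}) (a b g : F) : nat :=
  pair_count (fun x y => a * x + b * y) T T [set t + g | t in T].

Lemma mix_probE (R : realType) (F : finFieldType) (T : {set F}) a b g :
  mix_prob R T a b g = (mix_count T a b g)%:R / (#|T| ^ 2)%:R.
Proof. by rewrite /mix_count -pair_countE. Qed.

Section MixCount.
Variables (F : finFieldType) (T : {set F}) (a b g : F).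
Hypotheses (a_neq0 : a != 0) (b_neq0 : b != 0).

Lemma card_imset_addr : #|[set t + g | t in T]| = #|T|.
Proof. exact/card_imset/addIr. Qed.

Lemma mix_count_sum_rep :
  mix_count T a b g =
    (\sum_(c in [set (t + g)%R | t in T])
       rep [set (a * x)%R | x in T] [set (b * y)%R | y in T] c)%N.
Proof.
rewrite sum_rep_in /mix_count /pair_count big_imset /=; last exact: in2W (mulfI a_neq0).
by apply: eq_bigr => x _; rewrite big_imset //; exact: in2W (mulfI b_neq0).
Qed.

Lemma mix_count_pollard (t : nat) :
  (forall d x : F, d != 0 -> exists k, x = d *+ k) ->
  (t <= #|T|)%N -> (2 * #|T| <= #|F| + t)%N ->
  (mix_count T a b g + t * (#|T| - t) <= #|T| ^ 2)%N.
Proof.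
move=> onto tT TF.
have cardM c : c != 0 -> #|[set c * x | x in T]| = #|T| by move/mulfI/card_imset.
have := sum_rep_in_le onto [set t + g | t in T]
  (A := [set a * x | x in T]) (B := [set b * y | y in T]) (t := t).
rewrite -mix_count_sum_rep !cardM // card_imset_addr addnn -mul2n => /(_ tT tT TF).
have -> : (t * (2 * #|T| - t) = t * (#|T| - t) + t * #|T|)%N.
  by rewrite -mulnDr addnBAC // addnn mul2n.
by rewrite mulnn addnA leq_add2r.
Qed.

Lemma mix_count_two_thirds :
  (forall d x : F, d != 0 -> exists k, x = d *+ k) ->
  (2 <= #|T|)%N -> (3 * #|T| <= 2 * #|F|)%N ->
  (16 * mix_count T a b g <= 13 * #|T| ^ 2)%N.
Proof.
move=> onto T_ge2 TF.
have := @mix_count_pollard #|T|./2 onto ltac:(lia) ltac:(lia); nia.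
Qed.

Lemma mix_count_complement :
  (mix_count T a b g + #|T| * (#|F| - #|T|) <= #|T| ^ 2 + (#|F| - #|T|) ^ 2)%N.
Proof.
have cardC (X : {set F}) : #|~: X| = (#|F| - #|X|)%N by rewrite -(cardsC X) addKn.
have inj_y x : injective (fun y => a * x + b * y) by move=> y1 y2 /addrI /(mulfI b_neq0).
have inj_x y : injective (fun x => a * x + b * y) by move=> x1 x2 /addIr /(mulfI a_neq0).
have := pair_count_le T T [set t + g | t in T] inj_y inj_x.
by rewrite !cardC card_imset_addr mulnn.
Qed.
End MixCount.

Lemma Fp_natmul_onto p (d x : 'F_p) : d != 0 -> exists k, x = d *+ k.
Proof.
by move=> d_neq0; exists (nat_of_ord (x / d)); rewrite -mulr_natr natr_Zp mulrC divfK.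
Qed.

Lemma powR_Nlogb (R : realType) (q c : R) : 1 < q -> 0 < c -> q `^ (- logb q c) = c^-1.
Proof.
move=> q_gt1 c_gt0; have q_neq0 : q != 0 by rewrite gt_eqF // (lt_trans ltr01).
have lnq_neq0 : ln q != 0 by rewrite gt_eqF // ln_gt0.
by rewrite /powR (negbTE q_neq0) /logb mulNr divfK // expRN lnK.
Qed.

Lemma delta_mixing_logb (R : realType) (F : finFieldType) (T : {set F}) (c : R) :
  (0 < #|T|)%N -> 0 < c ->
  (forall a b g, a != 0 -> b != 0 -> (mix_count T a b g)%:R <= (#|T| ^ 2)%:R / c) ->
  delta_mixing T (logb #|F|%:R c).
Proof.
move=> T_gt0 c_gt0 count_le a b g a_neq0 b_neq0.
rewrite powR_Nlogb ?ltr1n ?card_finNzRing_gt1 // mix_probE.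
by rewrite ler_pdivrMr ?ltr0n ?expn_gt0 ?T_gt0 // mulrC count_le.
Qed.

Theorem corollary3p3 (R : realType) (q : nat) (Hq : prime q) (Hq3 : (3 <= q)%N)
  (T : {set 'F_q}) (HT : (1 <= #|T| <= q - 1)%N) :
  let l := #|T| in
  ((2 <= l)%N /\ (3 * l <= 2 * q)%N ->
     exists delta : R, logb (q%:R) (16 / 13) <= delta /\ delta_mixing T delta) /\
  (~ ((2 <= l)%N /\ (3 * l <= 2 * q)%N) ->
     exists delta : R,
       logb (q%:R) ((l%:R ^+ 2) / (q%:R ^+ 2 - 3 * l%:R * (q%:R - l%:R)))
         <= delta /\ delta_mixing T delta).
Proof.
move=> l; have cardF : #|'F_q| = q := card_Fp Hq.
have l_gt0 : (0 < l)%N by case/andP: HT.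
have l_le_q : (l <= q)%N by rewrite -cardF max_card.
have lR_gt0 : (0 : R) < l%:R by rewrite ltr0n.
split=> [[l_ge2 l_small] | _].
  exists (logb #|'F_q|%:R (16 / 13)); split; first by rewrite cardF.
  apply: delta_mixing_logb => // a b g a_neq0 b_neq0.
  have := mix_count_two_thirds g a_neq0 b_neq0 (@Fp_natmul_onto q) l_ge2.
  rewrite cardF => /(_ l_small); rewrite -(ler_nat R) !natrM invf_div.
  lra.
set D : R := _ - _.
have D_gt0 : 0 < D by rewrite /D; have := sqr_ge0 (2 * (q%:R : R) - 3 * l%:R); nra.
exists (logb #|'F_q|%:R (l%:R ^+ 2 / D)); split; first by rewrite cardF.
apply: delta_mixing_logb => // [|a b g a_neq0 b_neq0]; first by rewrite divr_gt0 ?exprn_gt0.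
have lD : l%:R ^+ 2 / (l%:R ^+ 2 / D) = D.
  by rewrite invf_div mulrCA divff ?mulr1 // expf_neq0 // gt_eqF.
have := mix_count_complement T g a_neq0 b_neq0.
rewrite cardF -(ler_nat R) !natrD !natrM natrB // -/l -expr2 lD /D; nra.
Qed.
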